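(* Let $\{\mathcal{G}_k\}_{k\ge0}$ be any sequence of digraphs on $\mathcal{V}=\{1,\dots,n\}$, $n\ge3$. Consider any algorithm in $\mathcal{A}_{\rm ave}$ whose parameters satisfy $\sum_{k=0}^\infty(1-\eta_k)<\infty$. Then for every initial time $k_0\ge0$ and every initial value $x^0\in\mathbb{R}^n$ not on the consensus manifold $\mathrm{C}=\{x: x_1=\dots=x_n\}$, asymptotic consensus is not achieved; in fact $\liminf_{K\to\infty}\big(\max_i x_i(K)-\min_i x_i(K)\big)>0$.
   Context: Network of nodes $\mathcal{V}=\{1,\dots,n\}$, discrete time, states $x_i(k)\in\mathbb{R}$. At each time $k$ a digraph $\mathcal{G}_k=(\mathcal{V},\mathcal{E}_k)$ is given; $j$ is a neighbor of $i$ at time $k$ if $(j,i)\in\mathcal{E}_k$, every node is always its own neighbor; $\mathcal{N}_i(k)$ is the neighbor set. The algorithm is $$x_i(k+1)=\eta_k x_i(k)+\alpha_k\min_{j\in\mathcal{N}_i(k)}x_j(k)+(1-\eta_k-\alpha_k)\max_{j\in\mathcal{N}_i(k)}x_j(k),$$ with given node-independent parameter sequences. The class $\mathcal{A}_{\rm ave}$ consists of those algorithms with $\eta_k\in(0,1]$, $\alpha_k\in[0,1-\eta_k]$ for all $k$. The iteration starts at time $k_0$ with $x(k_0)=x^0$. Asymptotic consensus for $x^0$ means there is $z_*\in\mathbb{R}$ with $\lim_{k\to\infty}x_i(k)=z_*$ for all $i$. *)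

(* real numbers. Nodes are 0..n-1 (paper: 1..n). *)
From Stdlib Require Import Reals Lra Lia List.
Import ListNotations.
Open Scope R_scope.

(* A time-varying digraph: E k j i = true iff (j,i) is an edge of G_k,
   i.e. j is a neighbor of i at time k. *)
Definition graph_seq := nat -> nat -> nat -> bool.

Definition nbrs (n : nat) (E : graph_seq) (k i : nat) : list nat :=
  filter (fun j => E k j i) (seq 0 n).

(* Since i is always
   its own neighbor (standing assumption, hypothesis in the theorem), starting
   the fold at x i gives exactly the min/max over N_i(k). *)
Definition nbr_min (n : nat) (E : graph_seq) (k i : nat) (x : nat -> R) : R :=
  fold_right Rmin (x i) (map x (nbrs n E k i)).
Definition nbr_max (n : nat) (E : graph_seq) (k i : nat) (x : nat -> R) : R :=
  fold_right Rmax (x i) (map x (nbrs n E k i)).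

Definition step (n : nat) (E : graph_seq) (eta alpha : nat -> R) (k : nat)
  (x : nat -> R) : nat -> R :=
  fun i => eta k * x i + alpha k * nbr_min n E k i x
           + (1 - eta k - alpha k) * nbr_max n E k i x.

Fixpoint traj (n : nat) (E : graph_seq) (eta alpha : nat -> R) (k0 : nat)
  (x0 : nat -> R) (m : nat) : nat -> R :=
  match m with
  | O => x0
  | S m' => step n E eta alpha (k0 + m') (traj n E eta alpha k0 x0 m')
  end.

Definition state (n : nat) (E : graph_seq) (eta alpha : nat -> R) (k0 : nat)
  (x0 : nat -> R) (K : nat) : nat -> R :=
  traj n E eta alpha k0 x0 (K - k0)%nat.

Definition spread (n : nat) (x : nat -> R) : R :=
  fold_right Rmax (x 0%nat) (map x (seq 0 n))
  - fold_right Rmin (x 0%nat) (map x (seq 0 n)).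

(* Write M(x) and m(x) for the largest and smallest entry of x, so that
   spread x = M(x) - m(x).  The argument has three parts.
   1. One step contracts the spread by at most the factor eta_k:
      the node attaining M(x) moves to at least eta M + alpha m + (1-eta-alpha) M,
      the node attaining m(x) to at most eta m + alpha m + (1-eta-alpha) M,
      hence spread x(k+1) >= eta_k * spread x(k)   ([step_spread_ge]).
   2. A nonnegative sequence with g(m+1) >= (1 - c_m) g(m), 0 <= c_m <= 1,
      satisfies g(m+d) >= g(m) (1 - c_m - ... - c_(m+d-1))
      ([product_lower_bound], a Weierstrass product inequality).
   3. Summability of c_k = 1 - eta_k makes all tails of the series at most
      1/2 from some index on ([summable_small_tail]).
   Since the spread is positive initially and every step keeps it positive,
   parts 1-3 give spread x(K) >= spread x(K1) / 2 > 0 for all K >= K1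
   ([spread_eventually_bounded_below]).  Consensus is then impossible, since
   coordinates converging to a common limit force the spread to 0. *)

From Stdlib Require Import Reals Lra Lia List.
Open Scope R_scope.

Lemma fold_max_ge_init a l : a <= fold_right Rmax a l.
Proof.
  induction l as [|v l IH]; simpl; [lra|].
  eapply Rle_trans; [exact IH | apply Rmax_r].
Qed.

Lemma fold_max_ge_mem a l v : In v l -> v <= fold_right Rmax a l.
Proof.
  induction l as [|w l IH]; simpl; [tauto|].
  intros [<- | Hv]; [apply Rmax_l|].
  eapply Rle_trans; [exact (IH Hv) | apply Rmax_r].
Qed.

Lemma fold_max_le a l B :
  a <= B -> (forall v, In v l -> v <= B) -> fold_right Rmax a l <= B.
Proof.
  intros Ha Hl; induction l as [|v l IH]; simpl; [exact Ha|].
  apply Rmax_lub; [apply Hl; simpl; auto|].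
  apply IH; intros; apply Hl; simpl; auto.
Qed.

Lemma fold_max_attained a l : fold_right Rmax a l = a \/ In (fold_right Rmax a l) l.
Proof.
  induction l as [|v l IH]; simpl; [auto|].
  destruct (Rle_dec v (fold_right Rmax a l)).
  - rewrite Rmax_right by assumption. destruct IH; auto.
  - rewrite Rmax_left by lra. auto.
Qed.

Lemma fold_min_le_init a l : fold_right Rmin a l <= a.
Proof.
  induction l as [|v l IH]; simpl; [lra|].
  eapply Rle_trans; [apply Rmin_r | exact IH].
Qed.

Lemma fold_min_le_mem a l v : In v l -> fold_right Rmin a l <= v.
Proof.
  induction l as [|w l IH]; simpl; [tauto|].
  intros [<- | Hv]; [apply Rmin_l|].
  eapply Rle_trans; [apply Rmin_r | exact (IH Hv)].
Qed.

Lemma fold_min_ge a l B :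
  B <= a -> (forall v, In v l -> B <= v) -> B <= fold_right Rmin a l.
Proof.
  intros Ha Hl; induction l as [|v l IH]; simpl; [exact Ha|].
  apply Rmin_glb; [apply Hl; simpl; auto|].
  apply IH; intros; apply Hl; simpl; auto.
Qed.

Lemma fold_min_attained a l : fold_right Rmin a l = a \/ In (fold_right Rmin a l) l.
Proof.
  induction l as [|v l IH]; simpl; [auto|].
  destruct (Rle_dec v (fold_right Rmin a l)).
  - rewrite Rmin_left by assumption. auto.
  - rewrite Rmin_right by lra. destruct IH; auto.
Qed.

Definition state_max (n : nat) (x : nat -> R) : R :=
  fold_right Rmax (x 0%nat) (map x (seq 0 n)).
Definition state_min (n : nat) (x : nat -> R) : R :=
  fold_right Rmin (x 0%nat) (map x (seq 0 n)).

Lemma spread_max_min n x : spread n x = state_max n x - state_min n x.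
Proof. reflexivity. Qed.

Lemma state_max_ge n x i : (i < n)%nat -> x i <= state_max n x.
Proof. intro Hi; apply fold_max_ge_mem, in_map, in_seq; lia. Qed.

Lemma state_min_le n x i : (i < n)%nat -> state_min n x <= x i.
Proof. intro Hi; apply fold_min_le_mem, in_map, in_seq; lia. Qed.

Lemma state_max_attained n x :
  (1 <= n)%nat -> exists i, (i < n)%nat /\ x i = state_max n x.
Proof.
  intro Hn. destruct (fold_max_attained (x 0%nat) (map x (seq 0 n))) as [H | H].
  - exists 0%nat; split; [lia | symmetry; exact H].
  - apply in_map_iff in H as [j [Hj Hin]]. apply in_seq in Hin.
    exists j; split; [lia | exact Hj].
Qed.

Lemma state_min_attained n x :
  (1 <= n)%nat -> exists i, (i < n)%nat /\ x i = state_min n x.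
Proof.
  intro Hn. destruct (fold_min_attained (x 0%nat) (map x (seq 0 n))) as [H | H].
  - exists 0%nat; split; [lia | symmetry; exact H].
  - apply in_map_iff in H as [j [Hj Hin]]. apply in_seq in Hin.
    exists j; split; [lia | exact Hj].
Qed.

Lemma spread_pos_of_nonconstant n x :
  (exists i j, (i < n)%nat /\ (j < n)%nat /\ x i <> x j) -> 0 < spread n x.
Proof.
  intros [i [j [Hi [Hj Hne]]]]. rewrite spread_max_min.
  pose proof (state_max_ge n x i Hi); pose proof (state_min_le n x i Hi).
  pose proof (state_max_ge n x j Hj); pose proof (state_min_le n x j Hj).
  destruct (Rlt_or_le (x i) (x j)); lra.
Qed.

Lemma spread_lt_of_close n x z e :
  (1 <= n)%nat -> (forall i, (i < n)%nat -> Rabs (x i - z) < e) -> spread n x < 2 * e.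
Proof.
  intros Hn Hclose. rewrite spread_max_min.
  destruct (state_max_attained n x Hn) as [a [Ha <-]].
  destruct (state_min_attained n x Hn) as [b [Hb <-]].
  pose proof (Hclose a Ha) as Hca; pose proof (Hclose b Hb) as Hcb.
  apply Rabs_def2 in Hca, Hcb. lra.
Qed.

Lemma nbrs_lt n E k i j : In j (nbrs n E k i) -> (j < n)%nat.
Proof. unfold nbrs; intros H. apply filter_In in H as [H _]. apply in_seq in H; lia. Qed.

Lemma nbr_max_le_state_max n E k i x :
  (i < n)%nat -> nbr_max n E k i x <= state_max n x.
Proof.
  intro Hi. apply fold_max_le; [apply state_max_ge; exact Hi|].
  intros v Hv. apply in_map_iff in Hv as [j [<- Hj]].
  apply state_max_ge. eapply nbrs_lt; eauto.
Qed.

Lemma state_min_le_nbr_min n E k i x :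
  (i < n)%nat -> state_min n x <= nbr_min n E k i x.
Proof.
  intro Hi. apply fold_min_ge; [apply state_min_le; exact Hi|].
  intros v Hv. apply in_map_iff in Hv as [j [<- Hj]].
  apply state_min_le. eapply nbrs_lt; eauto.
Qed.

Section OneStep.
Variables (n : nat) (E : graph_seq) (eta alpha : nat -> R) (k : nat) (x : nat -> R).
Hypothesis Halpha : 0 <= alpha k <= 1 - eta k.

Lemma step_at_argmax i :
  (i < n)%nat -> x i = state_max n x ->
  eta k * state_max n x + alpha k * state_min n x
    + (1 - eta k - alpha k) * state_max n x <= step n E eta alpha k x i.
Proof.
  intros Hi Hmax. unfold step. rewrite <- Hmax.
  pose proof (fold_max_ge_init (x i) (map x (nbrs n E k i))) as Hself.
  pose proof (state_min_le_nbr_min n E k i x Hi) as Hmin.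
  fold (nbr_max n E k i x) in Hself.
  assert (alpha k * state_min n x <= alpha k * nbr_min n E k i x)
    by (apply Rmult_le_compat_l; lra).
  assert ((1 - eta k - alpha k) * x i <= (1 - eta k - alpha k) * nbr_max n E k i x)
    by (apply Rmult_le_compat_l; lra).
  lra.
Qed.

Lemma step_at_argmin i :
  (i < n)%nat -> x i = state_min n x ->
  step n E eta alpha k x i <= eta k * state_min n x + alpha k * state_min n x
    + (1 - eta k - alpha k) * state_max n x.
Proof.
  intros Hi Hmin. unfold step. rewrite <- Hmin.
  pose proof (fold_min_le_init (x i) (map x (nbrs n E k i))) as Hself.
  pose proof (nbr_max_le_state_max n E k i x Hi) as Hmax.
  fold (nbr_min n E k i x) in Hself.
  assert (alpha k * nbr_min n E k i x <= alpha k * x i)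
    by (apply Rmult_le_compat_l; lra).
  assert ((1 - eta k - alpha k) * nbr_max n E k i x <= (1 - eta k - alpha k) * state_max n x)
    by (apply Rmult_le_compat_l; lra).
  lra.
Qed.

Lemma step_spread_ge :
  (1 <= n)%nat -> eta k * spread n x <= spread n (step n E eta alpha k x).
Proof.
  intro Hn. rewrite !spread_max_min.
  destruct (state_max_attained n x Hn) as [a [Ha HA]].
  destruct (state_min_attained n x Hn) as [b [Hb HB]].
  pose proof (step_at_argmax a Ha HA). pose proof (step_at_argmin b Hb HB).
  pose proof (state_max_ge n (step n E eta alpha k x) a Ha).
  pose proof (state_min_le n (step n E eta alpha k x) b Hb).
  lra.
Qed.

End OneStep.

Lemma product_lower_bound (g c : nat -> R) (p : nat) :
  (forall j, 0 <= c j <= 1) -> (forall m, 0 <= g m) ->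
  (forall m, (1 - c (p + m)%nat) * g m <= g (S m)) ->
  forall m d, g (S m) * (1 - (sum_f_R0 c (p + m + d) - sum_f_R0 c (p + m)))
              <= g (S m + d)%nat.
Proof.
  intros Hc Hg Hstep m d. induction d as [|d IH].
  - rewrite Nat.add_0_r, Nat.add_0_r. lra.
  - assert (Htail : 0 <= sum_f_R0 c (p + m + d) - sum_f_R0 c (p + m)).
    { clear IH. induction d as [|d IHd]; [rewrite Nat.add_0_r; lra|].
      replace (p + m + S d)%nat with (S (p + m + d)) by lia. simpl.
      pose proof (Hc (S (p + m + d))). lra. }
    replace (p + m + S d)%nat with (S (p + m + d)) by lia.
    replace (S m + S d)%nat with (S (S m + d)) by lia. simpl sum_f_R0.
    pose proof (Hstep (S m + d)%nat) as Hs.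
    replace (p + (S m + d))%nat with (S (p + m + d)) in Hs by lia.
    set (cj := c (S (p + m + d))) in *.
    set (T := sum_f_R0 c (p + m + d) - sum_f_R0 c (p + m)) in *.
    assert (Hcj : 0 <= cj <= 1) by apply Hc.
    assert (Hprop : (1 - cj) * (g (S m) * (1 - T)) <= (1 - cj) * g (S m + d)%nat)
      by (apply Rmult_le_compat_l; lra).
    assert (0 <= g (S m) * T * cj) by (pose proof (Hg (S m)); repeat apply Rmult_le_pos; lra).
    replace (sum_f_R0 c (p + m + d) + cj - sum_f_R0 c (p + m)) with (T + cj)
      by (unfold T; ring).
    nra.
Qed.

Lemma summable_small_tail (c : nat -> R) :
  (exists l, Un_cv (fun N => sum_f_R0 c N) l) ->
  exists N, forall a, (N <= a)%nat -> forall d,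
    sum_f_R0 c (a + d) - sum_f_R0 c a <= 1 / 2.
Proof.
  intros [l Hl]. destruct (Hl (1 / 4) ltac:(lra)) as [N HN].
  exists N. intros a Ha d.
  pose proof (HN (a + d)%nat ltac:(lia)) as H1. pose proof (HN a Ha) as H2.
  unfold R_dist in H1, H2. apply Rabs_def2 in H1, H2. lra.
Qed.

Lemma spread_eventually_bounded_below n E (eta alpha : nat -> R) k0 x0 :
  (1 <= n)%nat ->
  (forall k, 0 < eta k <= 1) -> (forall k, 0 <= alpha k <= 1 - eta k) ->
  (exists l, Un_cv (fun N => sum_f_R0 (fun k => 1 - eta k) N) l) ->
  (exists i j, (i < n)%nat /\ (j < n)%nat /\ x0 i <> x0 j) ->
  exists eps, eps > 0 /\ exists K1, forall K, (K1 <= K)%nat ->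
    spread n (state n E eta alpha k0 x0 K) >= eps.
Proof.
  intros Hn Heta Halpha Hsum Hx0.
  set (g m := spread n (traj n E eta alpha k0 x0 m)).
  set (c k := 1 - eta k).
  assert (Hc : forall k, 0 <= c k <= 1) by (intro k; unfold c; pose proof (Heta k); lra).
  assert (Hstep : forall m, (1 - c (k0 + m)%nat) * g m <= g (S m)).
  { intro m. unfold c, g; simpl. replace (1 - (1 - eta (k0 + m)%nat)) with (eta (k0 + m)%nat)
      by ring. exact (step_spread_ge n E eta alpha _ _ (Halpha _) Hn). }
  assert (Hpos : forall m, 0 < g m).
  { induction m as [|m IH]; [apply spread_pos_of_nonconstant; exact Hx0|].
    pose proof (Hstep m). pose proof (Heta (k0 + m)%nat). unfold c in *. nra. }
  destruct (summable_small_tail c Hsum) as [N HN].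
  exists (g (S N) / 2). split; [pose proof (Hpos (S N)); lra|].
  exists (k0 + S N)%nat. intros K HK. unfold state.
  replace (K - k0)%nat with (S N + (K - k0 - S N))%nat by lia. fold (g (S N + (K - k0 - S N))%nat).
  pose proof (product_lower_bound g c k0 Hc (fun m => Rlt_le _ _ (Hpos m)) Hstep N
                (K - k0 - S N)) as Hprod.
  pose proof (HN (k0 + N)%nat ltac:(lia) (K - k0 - S N)%nat) as Htail.
  pose proof (Hpos (S N)). nra.
Qed.

Lemma finite_uniform_convergence (u : nat -> nat -> R) z eps m :
  eps > 0 -> (forall i, (i < m)%nat -> Un_cv (fun K => u K i) z) ->
  exists N, forall K, (N <= K)%nat -> forall i, (i < m)%nat -> Rabs (u K i - z) < eps.
Proof.
  intros He. induction m as [|m IH]; intro Hcv.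
  - exists 0%nat; intros; lia.
  - destruct IH as [N1 HN1]; [intros; apply Hcv; lia|].
    destruct (Hcv m ltac:(lia) eps He) as [N2 HN2].
    exists (Nat.max N1 N2). intros K HK i Hi.
    destruct (Nat.eq_dec i m) as [-> | Hne]; [apply HN2; lia | apply HN1; lia].
Qed.

Theorem theorem2 (n : nat) (E : graph_seq) (eta alpha : nat -> R)
  (Hn : (3 <= n)%nat)
  (Hself : forall k i, (i < n)%nat -> E k i i = true)
  (Heta : forall k, 0 < eta k <= 1)
  (Halpha : forall k, 0 <= alpha k <= 1 - eta k)
  (Hsum : exists l, Un_cv (fun N => sum_f_R0 (fun k => 1 - eta k) N) l)
  (k0 : nat) (x0 : nat -> R)
  (Hx0 : exists i j, (i < n)%nat /\ (j < n)%nat /\ x0 i <> x0 j) :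
  ~ (exists z, forall i, (i < n)%nat ->
        Un_cv (fun K => state n E eta alpha k0 x0 K i) z)
  /\ (exists eps, eps > 0 /\ exists K1, forall K, (K1 <= K)%nat ->
        spread n (state n E eta alpha k0 x0 K) >= eps).
Proof.
  pose proof (spread_eventually_bounded_below n E eta alpha k0 x0 ltac:(lia)
                Heta Halpha Hsum Hx0) as Hbelow.
  split; [|exact Hbelow].
  intros [z Hz]. destruct Hbelow as [eps [Heps [K1 HK1]]].
  destruct (finite_uniform_convergence (fun K i => state n E eta alpha k0 x0 K i)
              z (eps / 2) n ltac:(lra) Hz) as [N HN].
  set (K := Nat.max N K1).
  pose proof (HK1 K ltac:(lia)).
  pose proof (spread_lt_of_close n (state n E eta alpha k0 x0 K) z (eps / 2)
                ltac:(lia) (HN K ltac:(lia))).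
  lra.
Qed.
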